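(* Let $(\Omega,\mathcal F)$ be a measurable space, $\mathcal X$ the set of bounded measurable functions on it, $W$ a nonempty set of capacities, $V$ a nonempty set of binary capacities, and $\alpha\in(0,1)$. Define pointwise on $\mathcal F$: $\overline w=\sup_{w\in W}w$, $\underline w=\inf_{w\in W}w$, $\overline v=\sup_{v\in V}v$, $\underline v=\inf_{v\in V}v$. Then, as functions on $\mathcal X$, $$\sup_{w\in W}Q^w_\alpha=Q^{\overline w}_\alpha,\qquad \sup_{v\in V}I_v=I_{\overline v},\qquad \inf_{w\in W}\overline Q^w_\alpha=\overline Q^{\underline w}_\alpha,\qquad \inf_{v\in V}I_v=I_{\underline v}.$$
   Context: A capacity is an increasing function $w:\mathcal F\to\mathbb R$ (i.e. $w(A)\le w(B)$ for $A\subseteq B$) with $w(\varnothing)=0$, $w(\Omega)=1$; it is binary if it takes values in $\{0,1\}$. For a capacity $w$, $I_w(X)=\int X\,\mathrm dw=\int_{-\infty}^0(w(X\ge x)-1)\,\mathrm dx+\int_0^\infty w(X\ge x)\,\mathrm dx$ for $X\in\mathcal X$. For a capacity $w$: $Q^w_\alpha(X)=\inf\{x\in\mathbb R: w(X\ge x)\le 1-\alpha\}$ and $\overline Q^w_\alpha(X)=\inf\{x\in\mathbb R: w(X\ge x)<1-\alpha\}$. *)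

From HB Require Import structures.
From mathcomp Require Import all_boot all_order all_algebra.
From mathcomp Require Import all_classical all_reals all_analysis.
Set Implicit Arguments. Unset Strict Implicit. Unset Printing Implicit Defensive.
Import Order.TTheory GRing.Theory Num.Theory.
Local Open Scope classical_set_scope.
Local Open Scope ring_scope.

Section Defs.
Context {d : measure_display} {T : measurableType d} {R : realType}.

(* A capacity: a set function, increasing on F, w(empty)=0, w(Omega)=1.
   Only its values on measurable sets (the sigma-algebra F) matter. *)
Definition capacity (w : set T -> R) : Prop :=
  [/\ w set0 = 0, w setT = 1 &
      forall A B, measurable A -> measurable B -> A `<=` B -> w A <= w B].

Definition binary_capacity (w : set T -> R) : Prop :=
  capacity w /\ forall A, measurable A -> w A = 0 \/ w A = 1.

Definition bounded_measurable (X : T -> R) : Prop :=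
  measurable_fun setT X /\ exists M : R, forall t, `|X t| <= M.

Definition geset (X : T -> R) (x : R) : set T := [set t | x <= X t].

Definition choquet (w : set T -> R) (X : T -> R) : \bar R :=
  (\int[lebesgue_measure]_(x in `]-oo, 0%R[) ((w (geset X x) - 1)%:E)
   + \int[lebesgue_measure]_(x in `[0%R, +oo[) ((w (geset X x))%:E))%E.

Definition lquant (w : set T -> R) (alpha : R) (X : T -> R) : R :=
  inf [set x : R | w (geset X x) <= 1 - alpha].

Definition uquant (w : set T -> R) (alpha : R) (X : T -> R) : R :=
  inf [set x : R | w (geset X x) < 1 - alpha].

Definition supcap (W : set (set T -> R)) : set T -> R :=
  fun A => sup [set w A | w in W].
Definition infcap (W : set (set T -> R)) : set T -> R :=
  fun A => inf [set w A | w in W].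

End Defs.

From HB Require Import structures.
From mathcomp Require Import all_boot all_order all_algebra.
From mathcomp Require Import all_classical all_reals all_analysis.
Set Implicit Arguments.
Unset Strict Implicit.
Unset Printing Implicit Defensive.
Import Order.TTheory GRing.Theory Num.Theory.
Local Open Scope classical_set_scope.
Local Open Scope ring_scope.

(* For a capacity w and |X| <= M, the map x |-> w(X >= x) is nonincreasing,
   equal to 1 for x <= -M and to 0 for x > M.  The sets {x | w(X >= x) <= c}
   are therefore up-sets bounded below, and sup_w w(A) <= c holds iff every
   w(A) <= c: the up-set of the upper envelope is the intersection of the
   up-sets, and the infimum of an intersection of up-sets is the supremum of
   their infima.  Dually, inf_w w(A) < c iff some w(A) < c, which turns the
   lower envelope into a union and the infimum into an infimum of infima.
   For a binary capacity v, x |-> v(X >= x) is the indicator of a ray ending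
   at sup {x | v(X >= x) = 1}, so the Choquet integral is that endpoint.
   Envelopes of binary capacities are binary, and their rays are the union
   (resp. intersection) of the rays of the members. *)

Section SupInfFamily.
Variables (R : realType) (I : Type) (P : set I) (F : I -> set R).
Hypothesis P0 : P !=set0.

Lemma sup_bigcup (M : R) : (forall i, P i -> F i !=set0) ->
  (forall i, P i -> ubound (F i) M) ->
  sup (\bigcup_(i in P) F i) = sup [set sup (F i) | i in P].
Proof.
move=> F0 FM; have [i0 Pi0] := P0; have [x0 Fx0] := F0 _ Pi0.
have supF_le i : P i -> sup (F i) <= M.
  by move=> Pi; exact: ge_sup (F0 _ Pi) (FM _ Pi).
have FsupF i : P i -> ubound (F i) (sup (F i)).
  by move=> Pi; apply: ub_le_sup; exists M; exact: FM.
apply: le_anti; apply/andP; split.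
- apply: ge_sup => [|x [i Pi Fix]]; first by exists x0, i0.
  apply: le_trans (FsupF _ Pi _ Fix) _; apply: ub_le_sup; last by exists i.
  by exists M => _ [j Pj <-]; exact: supF_le.
- apply: ge_sup => [|_ [i Pi <-]]; first by exists (sup (F i0)), i0.
  apply: ge_sup (F0 _ Pi) _ => x Fix; apply: ub_le_sup; last by exists i.
  by exists M => y [j Pj]; exact: FM.
Qed.

Lemma inf_bigcup (m : R) : (forall i, P i -> F i !=set0) ->
  (forall i, P i -> lbound (F i) m) ->
  inf (\bigcup_(i in P) F i) = inf [set inf (F i) | i in P].
Proof.
move=> F0 Fm; have [i0 Pi0] := P0; have [x0 Fx0] := F0 _ Pi0.
have infF_ge i : P i -> m <= inf (F i).
  by move=> Pi; exact: lb_le_inf (F0 _ Pi) (Fm _ Pi).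
have FinfF i : P i -> lbound (F i) (inf (F i)).
  by move=> Pi; apply: ge_inf; exists m; exact: Fm.
apply: le_anti; apply/andP; split.
- apply: lb_le_inf => [|_ [i Pi <-]]; first by exists (inf (F i0)), i0.
  apply: lb_le_inf (F0 _ Pi) _ => x Fix; apply: ge_inf; last by exists i.
  by exists m => y [j Pj]; exact: Fm.
- apply: lb_le_inf => [|x [i Pi Fix]]; first by exists x0, i0.
  apply: le_trans (FinfF _ Pi _ Fix); apply: ge_inf; last by exists i.
  by exists m => _ [j Pj <-]; exact: infF_ge.
Qed.

Lemma inf_bigcap (m z : R) :
  (forall i x y, P i -> x <= y -> F i x -> F i y) ->
  (forall i, P i -> lbound (F i) m) -> (forall i, P i -> F i z) ->
  inf (\bigcap_(i in P) F i) = sup [set inf (F i) | i in P].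
Proof.
move=> Fup Fm Fz; have [i0 Pi0] := P0.
have FinfF i : P i -> lbound (F i) (inf (F i)).
  by move=> Pi; apply: ge_inf; exists m; exact: Fm.
have infF_le_sup i : P i -> inf (F i) <= sup [set inf (F i) | i in P].
  move=> Pi; apply: ub_le_sup; last by exists i.
  by exists z => _ [j Pj <-]; exact: FinfF _ Pj _ (Fz _ Pj).
apply: le_anti; apply/andP; split.
- apply/ler_addgt0Pr => e e0.
  apply: ge_inf; first by exists m => x /(_ _ Pi0); exact: Fm.
  move=> i Pi.
  have [u Fiu ule] : exists2 u, F i u & u < sup [set inf (F i) | i in P] + e.
    apply: inf_lt; first by exists z; exact: Fz.
    by apply: le_lt_trans (infF_le_sup _ Pi) _; rewrite ltrDl.
  exact: Fup (ltW ule) Fiu.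
- apply: lb_le_inf => [|x Fx]; first by exists z.
  apply: ge_sup => [|_ [i Pi <-]]; first by exists (inf (F i0)), i0.
  exact: FinfF (Fx _ Pi).
Qed.

Lemma sup_bigcap (M z : R) :
  (forall i x y, P i -> x <= y -> F i y -> F i x) ->
  (forall i, P i -> ubound (F i) M) -> (forall i, P i -> F i z) ->
  sup (\bigcap_(i in P) F i) = inf [set sup (F i) | i in P].
Proof.
move=> Fdown FM Fz; have [i0 Pi0] := P0.
have FsupF i : P i -> ubound (F i) (sup (F i)).
  by move=> Pi; apply: ub_le_sup; exists M; exact: FM.
have inf_le_supF i : P i -> inf [set sup (F i) | i in P] <= sup (F i).
  move=> Pi; apply: ge_inf; last by exists i.
  by exists z => _ [j Pj <-]; exact: FsupF _ Pj _ (Fz _ Pj).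
apply: le_anti; apply/andP; split.
- apply: ge_sup => [|x Fx]; first by exists z.
  apply: lb_le_inf => [|_ [i Pi <-]]; first by exists (sup (F i0)), i0.
  exact: FsupF (Fx _ Pi).
- apply/ler_addgt0Pr => e e0; rewrite -lerBlDr.
  apply: ub_le_sup; first by exists M => x /(_ _ Pi0); exact: FM.
  move=> i Pi.
  have [u Fiu ule] : exists2 u, F i u & inf [set sup (F i) | i in P] - e < u.
    apply: sup_gt; first by exists z; exact: Fz.
    by apply: lt_le_trans (inf_le_supF _ Pi); rewrite gtrDl oppr_lt0.
  exact: Fdown (ltW ule) Fiu.
Qed.
End SupInfFamily.

Section ChoquetRay.
Variable R : realType.
Implicit Types (a b c : R) (A B : set R).

Lemma lebesgue_measure_sandwich a b B : measurable B ->
  [set` `]a, b[] `<=` B -> B `<=` [set` `[a, b]] ->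
  lebesgue_measure B = (if a < b then (b - a)%:E else 0%E).
Proof.
move=> mB oB Bc; apply/le_anti/andP; split.
- apply: (le_trans (le_measure lebesgue_measure _ _ Bc)); rewrite ?inE //.
  have := lebesgue_measure_itv `[a, b]; rewrite /= lte_fin => ->.
  by case: ltP.
- apply: (le_trans _ (le_measure lebesgue_measure _ _ oB)); rewrite ?inE //.
  have := lebesgue_measure_itv `]a, b[; rewrite /= lte_fin => ->.
  by case: ltP.
Qed.

Lemma measurable_ray_sandwich A c :
  [set` `]-oo, c[] `<=` A -> A `<=` [set` `]-oo, c]] -> measurable A.
Proof.
move=> oA Ac; have [Ac'|nAc] := pselect (A c).
  suff -> : A = [set` `]-oo, c]] by [].
  apply/seteqP; split => // x /=; rewrite in_itv /= le_eqVlt.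
  by case/orP => [/eqP -> //|xc]; apply: oA; rewrite /= in_itv.
suff -> : A = [set` `]-oo, c[] by [].
apply/seteqP; split => // x Ax /=; rewrite in_itv /= lt_neqAle.
by have := Ac x Ax; rewrite /= in_itv /= => ->; case: eqP Ax => // ->.
Qed.

Lemma choquet_formula_indic_ray A c :
  [set` `]-oo, c[] `<=` A -> A `<=` [set` `]-oo, c]] ->
  (\int[lebesgue_measure]_(x in `]-oo, 0%R[) ((\1_A x - 1)%:E)
   + \int[lebesgue_measure]_(x in `[0%R, +oo[) ((\1_A x)%:E))%E = c%:E.
Proof.
move=> oA Ac.
have mA : measurable A := measurable_ray_sandwich oA Ac.
have -> : (\int[lebesgue_measure]_(x in `]-oo, 0%R[) ((\1_A x - 1)%:E) =
    \int[lebesgue_measure]_(x in `]-oo, 0%R[) (- (\1_(~` A) x)%:E))%E.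
  apply: eq_integral => x _; rewrite indicC /indic.
  by case: (x \in A); rewrite /= ?subrr ?sub0r ?oppr0.
rewrite integral_ge0N; last by move=> x _; rewrite lee_fin.
rewrite !integral_indic //; last exact: measurableC.
transitivity (- (if (c < 0)%R then (0 - c)%:E else 0)
               + (if (0 < c)%R then (c - 0)%:E else 0))%E.
  congr (- _ + _)%E; apply: lebesgue_measure_sandwich.
  - by apply: measurableI => //; exact: measurableC.
  - move=> x /=; rewrite in_itv /= => /andP[cx x0].
    split; last by rewrite /= in_itv /= x0.
    by move=> /Ac; rewrite /= in_itv /= leNgt cx.
  - move=> x [/= nAx]; rewrite !in_itv /= => x0; rewrite (ltW x0) andbT leNgt.
    by apply/negP => xc; apply: nAx; apply: oA; rewrite /= in_itv /= xc.
  - exact: measurableI.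
  - move=> x /=; rewrite in_itv /= => /andP[x0 xc].
    split; last by rewrite /= in_itv /= ltW.
    by apply: oA; rewrite /= in_itv /= xc.
  - by move=> x [/Ac]; rewrite /= !in_itv /= => -> /andP[-> _].
case: (ltgtP c 0) => [c0|c0|->]; rewrite ?oppe0 ?add0e ?adde0 ?sub0r ?subr0 //.
by rewrite -EFinN opprK.
Qed.

End ChoquetRay.

Section Subset01.
Variable R : realType.
Implicit Types S : set R.

Lemma sup_subset01 S : S !=set0 -> S `<=` [set 0; 1] ->
  sup S = if `[< S 1 >] then 1 else 0.
Proof.
move=> S0 S01; case: asboolP => [S1|nS1].
  apply/le_anti/andP; split; last by apply: ub_le_sup S1; exists 1 => x /S01 [|] ->.
  by apply: ge_sup S0 _ => x /S01 [|] ->.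
have [S_0|->] : S = set0 \/ S = [set 0]; last exact: sup1.
  by apply: subset_set1 => x Sx; case: (S01 x Sx) => // x1; rewrite x1 in Sx.
by move: S0; rewrite S_0 => /set0P/eqP.
Qed.

Lemma inf_subset01 S : S !=set0 -> S `<=` [set 0; 1] ->
  inf S = if `[< S 0 >] then 0 else 1.
Proof.
move=> S0 S01; case: asboolP => [S0'|nS0].
  apply/le_anti/andP; split; first by apply: ge_inf S0'; exists 0 => x /S01 [|] ->.
  by apply: lb_le_inf S0 _ => x /S01 [|] ->.
have [S_0|->] : S = set0 \/ S = [set 1]; last exact: inf1.
  by apply: subset_set1 => x Sx; case: (S01 x Sx) => // x0; rewrite x0 in Sx.
by move: S0; rewrite S_0 => /set0P/eqP.
Qed.

End Subset01.

Section Capacity.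
Context {d : measure_display} {T : measurableType d} {R : realType}.
Implicit Types (w : set T -> R) (W : set (set T -> R)) (A : set T).

Lemma capacity_ge0 w A : capacity w -> measurable A -> 0 <= w A.
Proof. by case=> w0 _ wle mA; rewrite -w0 wle. Qed.

Lemma capacity_le1 w A : capacity w -> measurable A -> w A <= 1.
Proof. by case=> _ w1 wle mA; rewrite -w1 wle. Qed.

Variable W : set (set T -> R).
Hypotheses (W0 : W !=set0) (Wcap : forall w, W w -> capacity w).

Let image_capacities_nonempty A : [set w A | w in W] !=set0.
Proof. by case: W0 => w Ww; exists (w A), w. Qed.

Lemma le_supcap w A : W w -> measurable A -> w A <= supcap W A.
Proof.
move=> Ww mA; apply: ub_le_sup; last by exists w.
by exists 1 => _ [v Wv <-]; exact: capacity_le1 (Wcap Wv) mA.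
Qed.

Lemma infcap_le w A : W w -> measurable A -> infcap W A <= w A.
Proof.
move=> Ww mA; apply: ge_inf; last by exists w.
by exists 0 => _ [v Wv <-]; exact: capacity_ge0 (Wcap Wv) mA.
Qed.

Lemma supcap_le A c : measurable A ->
  supcap W A <= c <-> forall w, W w -> w A <= c.
Proof.
move=> mA; split => [le_c w Ww | ub_c]; first exact: le_trans (le_supcap Ww mA) le_c.
by apply: ge_sup => // _ [w Ww <-]; exact: ub_c.
Qed.

Lemma infcap_lt A c : measurable A ->
  infcap W A < c <-> exists2 w, W w & w A < c.
Proof.
move=> mA; split => [/inf_lt[|_ [w Ww <-] wc]|[w Ww wc]] //; first by exists w.
exact: le_lt_trans (infcap_le Ww mA) wc.
Qed.

Let image_capacities_cst A c : (forall w, W w -> w A = c) ->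
  [set w A | w in W] = [set c].
Proof.
move=> Wc; rewrite (eq_imagel Wc) set_cst.
by have /set0P/negbTE -> := W0.
Qed.

Lemma capacity_supcap : capacity (supcap W).
Proof.
split.
- by rewrite /supcap (@image_capacities_cst _ 0) ?sup1 // => w /Wcap[].
- by rewrite /supcap (@image_capacities_cst _ 1) ?sup1 // => w /Wcap[].
move=> A B mA mB AB; apply/supcap_le => // w Ww.
by apply: le_trans (le_supcap Ww mB); case: (Wcap Ww) => _ _; apply.
Qed.

Lemma capacity_infcap : capacity (infcap W).
Proof.
split.
- by rewrite /infcap (@image_capacities_cst _ 0) ?inf1 // => w /Wcap[].
- by rewrite /infcap (@image_capacities_cst _ 1) ?inf1 // => w /Wcap[].
move=> A B mA mB AB; apply: lb_le_inf => // _ [w Ww <-].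
by apply: le_trans (infcap_le Ww mA) _; case: (Wcap Ww) => _ _; apply.
Qed.

End Capacity.

Section BinaryCapacity.
Context {d : measure_display} {T : measurableType d} {R : realType}.
Variable V : set (set T -> R).
Hypotheses (V0 : V !=set0) (Vbin : forall v, V v -> binary_capacity v).

Let Vcap v : V v -> capacity v. Proof. by case/Vbin. Qed.

Let image_binary_subset01 A : measurable A -> [set v A | v in V] `<=` [set 0; 1].
Proof. by move=> mA _ [v /Vbin[_ v01] <-]; exact: v01. Qed.

Lemma supcap_binary A : measurable A ->
  supcap V A = if `[< exists2 v, V v & v A = 1 >] then 1 else 0.
Proof.
move=> mA; apply: sup_subset01; last exact: image_binary_subset01.
by case: V0 => v Vv; exists (v A), v.
Qed.

Lemma infcap_binary A : measurable A ->
  infcap V A = if `[< exists2 v, V v & v A = 0 >] then 0 else 1.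
Proof.
move=> mA; apply: inf_subset01; last exact: image_binary_subset01.
by case: V0 => v Vv; exists (v A), v.
Qed.

Lemma binary_capacity_supcap : binary_capacity (supcap V).
Proof.
split; first exact: capacity_supcap.
by move=> A mA; rewrite supcap_binary //; case: asboolP; [right|left].
Qed.

Lemma binary_capacity_infcap : binary_capacity (infcap V).
Proof.
split; first exact: capacity_infcap.
by move=> A mA; rewrite infcap_binary //; case: asboolP; [left|right].
Qed.

End BinaryCapacity.

Definition certain_levels {d} {T : measurableType d} {R : realType}
  (w : set T -> R) (X : T -> R) : set R := [set x | w (geset X x) = 1].

Section Levels.
Context {d : measure_display} {T : measurableType d} {R : realType}.
Context {X : T -> R} {M : R}.
Hypotheses (mX : measurable_fun setT X) (XM : forall t, `|X t| <= M).
Implicit Types (w : set T -> R) (x y : R).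

Lemma measurable_geset x : measurable (geset X x).
Proof.
have := mX measurableT (measurable_itv `[x, +oo[); rewrite setTI.
by congr measurable; apply/seteqP; split => t /=; rewrite in_itv /= andbT.
Qed.

Lemma geset_le x y : x <= y -> geset X y `<=` geset X x.
Proof. by move=> xy t /=; exact: le_trans. Qed.

Lemma gesetT x : x <= - M -> geset X x = setT.
Proof.
move=> xM; apply/seteqP; split => // t _ /=.
by apply: le_trans xM _; have := XM t; rewrite ler_norml => /andP[].
Qed.

Lemma geset0 x : M < x -> geset X x = set0.
Proof.
move=> Mx; apply/seteqP; split => // t /= xt.
by have := le_trans (ler_norm (X t)) (XM t); rewrite leNgt (lt_le_trans Mx xt).
Qed.

Lemma capacity_geset_le w x y : capacity w -> x <= y ->
  w (geset X y) <= w (geset X x).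
Proof.
by case=> _ _ wle xy; apply: wle; [exact: measurable_geset.. | exact: geset_le].
Qed.

Lemma capacity_geset_lt1 w x : capacity w -> w (geset X x) < 1 -> - M < x.
Proof. by case=> _ w1 _; apply: contraTlt => /gesetT ->; rewrite w1 ltxx. Qed.

Lemma capacity_geset_gt0 w x : capacity w -> 0 < w (geset X x) -> x <= M.
Proof. by case=> w0 _ _; apply: contraTle => /geset0 ->; rewrite w0 ltxx. Qed.

Lemma certain_levels_le w x y : capacity w -> x <= y ->
  certain_levels w X y -> certain_levels w X x.
Proof.
move=> cw xy wy; apply/le_anti; rewrite (capacity_le1 cw (measurable_geset _)) /=.
by rewrite -{1}wy capacity_geset_le.
Qed.

Lemma certain_levels_low w x : capacity w -> x <= - M -> certain_levels w X x.
Proof. by case=> _ w1 _ xM; rewrite /certain_levels /= gesetT. Qed.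

Lemma certain_levels_ub w : capacity w -> ubound (certain_levels w X) M.
Proof. by move=> cw x wx; apply: capacity_geset_gt0 cw _; rewrite wx. Qed.

Lemma sup_certain_levels_bounds w : capacity w ->
  - M <= sup (certain_levels w X) <= M.
Proof.
move=> cw; rewrite ge_sup ?andbT; last exact: certain_levels_ub.
  apply: ub_le_sup; last exact: certain_levels_low.
  by exists M; exact: certain_levels_ub.
by exists (- M); exact: certain_levels_low.
Qed.

Lemma choquet_binary w : binary_capacity w ->
  choquet w X = (sup (certain_levels w X))%:E.
Proof.
move=> [cw w01]; set S := certain_levels w X.
have wS x : w (geset X x) = \1_S x.
  rewrite /indic; case: (w01 _ (measurable_geset x)) => wx; last by rewrite mem_set.
  by rewrite memNset //= /S /certain_levels /= wx => /eqP; rewrite eq_sym oner_eq0.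
rewrite /choquet; under eq_integral do rewrite wS.
under [Y in (_ + Y)%E]eq_integral do rewrite wS.
apply: choquet_formula_indic_ray => [x /=|x Sx].
  rewrite in_itv /= => /sup_gt[|y Sy xy].
    by exists (- M); exact: certain_levels_low.
  exact: certain_levels_le cw (ltW xy) Sy.
by rewrite /= in_itv /=; apply: ub_le_sup Sx; exists M; exact: certain_levels_ub.
Qed.

Lemma certain_levels_supcap (V : set (set T -> R)) : V !=set0 ->
  (forall v, V v -> binary_capacity v) ->
  certain_levels (supcap V) X = \bigcup_(v in V) certain_levels v X.
Proof.
move=> V0 Vbin; rewrite predeqE => x.
rewrite /certain_levels /= (supcap_binary V0 Vbin (measurable_geset x)).
by case: asboolP => // nV; split => [/esym/eqP|/nV//]; rewrite oner_eq0.
Qed.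

Lemma certain_levels_infcap (V : set (set T -> R)) : V !=set0 ->
  (forall v, V v -> binary_capacity v) ->
  certain_levels (infcap V) X = \bigcap_(v in V) certain_levels v X.
Proof.
move=> V0 Vbin; rewrite predeqE => x.
rewrite /certain_levels /= (infcap_binary V0 Vbin (measurable_geset x)).
case: asboolP => [[v Vv v0]|nV]; split => //.
- by move=> /eqP; rewrite eq_sym oner_eq0.
- by move=> /(_ v Vv) /=; rewrite v0 => /eqP; rewrite eq_sym oner_eq0.
move=> _ v Vv; have [_ /(_ _ (measurable_geset x))[v0|//]] := Vbin v Vv.
by case: nV; exists v.
Qed.

Lemma image_choquet_binary (V : set (set T -> R)) :
  (forall v, V v -> binary_capacity v) ->
  [set choquet v X | v in V] = EFin @` [set sup (certain_levels v X) | v in V].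
Proof.
move=> Vbin; rewrite image_comp; apply: eq_imagel => v /Vbin.
exact: choquet_binary.
Qed.

Lemma sup_lquant (W : set (set T -> R)) alpha : W !=set0 ->
  (forall w, W w -> capacity w) -> 0 < alpha <= 1 ->
  sup [set lquant w alpha X | w in W] = lquant (supcap W) alpha X.
Proof.
move=> W0 Wcap /andP[a0 a1]; rewrite /lquant.
have -> : [set x | supcap W (geset X x) <= 1 - alpha] =
    \bigcap_(w in W) [set x | w (geset X x) <= 1 - alpha].
  by rewrite predeqE => x; exact: supcap_le (measurable_geset x).
rewrite (@inf_bigcap _ _ _ _ W0 (- M) (M + 1)) // => w.
- move=> x y Ww xy /= wx; apply: le_trans wx.
  exact: capacity_geset_le (Wcap w Ww) xy.
- move=> Ww x /= wx; apply/ltW/(capacity_geset_lt1 (Wcap w Ww)).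
  by apply: le_lt_trans wx _; rewrite gtrDl oppr_lt0.
- by case/Wcap => w0 _ _ /=; rewrite geset0 ?ltrDl // w0 subr_ge0.
Qed.

Lemma inf_uquant (W : set (set T -> R)) alpha : W !=set0 ->
  (forall w, W w -> capacity w) -> 0 <= alpha < 1 ->
  inf [set uquant w alpha X | w in W] = uquant (infcap W) alpha X.
Proof.
move=> W0 Wcap /andP[a0 a1]; rewrite /uquant.
have -> : [set x | infcap W (geset X x) < 1 - alpha] =
    \bigcup_(w in W) [set x | w (geset X x) < 1 - alpha].
  by rewrite predeqE => x; exact: infcap_lt (measurable_geset x).
rewrite (@inf_bigcup _ _ _ _ W0 (- M)) // => w Ww.
- case: (Wcap w Ww) => w0 _ _; exists (M + 1).
  by rewrite /= geset0 ?ltrDl // w0 subr_gt0.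
- move=> x /= wx; apply/ltW/(capacity_geset_lt1 (Wcap w Ww)).
  by apply: lt_le_trans wx _; rewrite gerDl oppr_le0.
Qed.

Lemma sup_choquet_binary (V : set (set T -> R)) : V !=set0 ->
  (forall v, V v -> binary_capacity v) ->
  ereal_sup [set choquet v X | v in V] = choquet (supcap V) X.
Proof.
move=> V0 Vbin; have Vcap v : V v -> capacity v by case/Vbin.
rewrite image_choquet_binary // ereal_sup_EFin; first last.
- by case: V0 => v Vv; exists (sup (certain_levels v X)), v.
- by exists M => _ [v /Vcap/sup_certain_levels_bounds/andP[_ leM] <-].
rewrite choquet_binary; last exact: binary_capacity_supcap.
rewrite certain_levels_supcap //.
rewrite (@sup_bigcup _ _ _ _ V0 M) // => v /Vcap cv; last exact: certain_levels_ub.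
by exists (- M); exact: certain_levels_low.
Qed.

Lemma inf_choquet_binary (V : set (set T -> R)) : V !=set0 ->
  (forall v, V v -> binary_capacity v) ->
  ereal_inf [set choquet v X | v in V] = choquet (infcap V) X.
Proof.
move=> V0 Vbin; have Vcap v : V v -> capacity v by case/Vbin.
rewrite image_choquet_binary // ereal_inf_EFin; first last.
- by case: V0 => v Vv; exists (sup (certain_levels v X)), v.
- by exists (- M) => _ [v /Vcap/sup_certain_levels_bounds/andP[geM _] <-].
rewrite choquet_binary; last exact: binary_capacity_infcap.
rewrite certain_levels_infcap //.
rewrite (@sup_bigcap _ _ _ _ V0 M (- M)) // => v.
- by move=> x y /Vcap; exact: certain_levels_le.
- by move/Vcap; exact: certain_levels_ub.
- by move=> /Vcap cv; exact: certain_levels_low cv (lexx _).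
Qed.

End Levels.

Theorem proposition3 (d : measure_display) (T : measurableType d) (R : realType)
    (W V : set (set T -> R)) (alpha : R) :
  W !=set0 -> (forall w, W w -> capacity w) ->
  V !=set0 -> (forall v, V v -> binary_capacity v) ->
  0 < alpha < 1 ->
  forall X : T -> R, bounded_measurable X ->
    [/\ sup [set lquant w alpha X | w in W] = lquant (supcap W) alpha X,
        ereal_sup [set choquet v X | v in V] = choquet (supcap V) X,
        inf [set uquant w alpha X | w in W] = uquant (infcap W) alpha X &
        ereal_inf [set choquet v X | v in V] = choquet (infcap V) X].
Proof.
move=> W0 Wcap V0 Vbin /andP[a0 a1] X [mX [M XM]]; split.
- by apply: (sup_lquant mX XM) => //; rewrite a0 ltW.
- exact: (sup_choquet_binary mX XM).
- by apply: (inf_uquant mX XM) => //; rewrite ltW.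
- exact: (inf_choquet_binary mX XM).
Qed.
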